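(* Suppose the family of sets $\{\tau^{(n)}_{r,s}(B(r,n)):n\ge1,\ 1\le r\le m_n,\ 1\le s\le k(r,n)\}$ is a basis for the topology of $X$. For $n\ge1$ let $\widetilde C(U_n,\mathbb Z)=\{f\in C(U_n,\mathbb Z): f \text{ is constant on } B(r,n) \text{ for each } 1\le r\le m_n\}$. Then the connecting maps $\phi_n$ map $\widetilde C(U_n,\mathbb Z)$ into $\widetilde C(U_{n+1},\mathbb Z)$, and the inclusions $\widetilde C(U_n,\mathbb Z)\subseteq C(U_n,\mathbb Z)$ induce a group isomorphism $$\varinjlim\big(\widetilde C(U_n,\mathbb Z),\phi_n|_{\widetilde C(U_n,\mathbb Z)}\big)\cong\varinjlim\big(C(U_n,\mathbb Z),\phi_n\big).$$
   Context: Let $X$ be a compact metrizable space having a basis of clopen sets. A partial homeomorphism of $X$ is a homeomorphism $\sigma:\mathrm{Dom}(\sigma)\to\mathrm{Ran}(\sigma)$ between clopen subsets of $X$. The composition $\rho\circ\sigma$ has domain $\sigma^{-1}(\mathrm{Ran}(\sigma)\cap\mathrm{Dom}(\rho))$. Data: positive integers $m_n$ ($n\ge1$), $m_0=1$; for each $n\ge1$ and $1\le r\le m_n$ a nonempty clopen set $B(r,n)\subseteq X$, such that for fixed $n$ the sets $B(1,n),\dots,B(m_n,n)$ are pairwise disjoint, a positive integer $\kappa(r,n)$, and partial homeomorphisms $\sigma^{(n)}_{r,s}$ ($1\le s\le\kappa(r,n)$) with $\mathrm{Dom}(\sigma^{(n)}_{r,s})=B(r,n)$. Put $U_n=\bigcup_{r=1}^{m_n}B(r,n)$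 for $n\ge1$ and $U_0=B(1,0)=X$. Standing conditions, for every $n\ge1$: (i) $\sigma^{(n)}_{r,1}$ is the identity map of $B(r,n)$ for all $r$; (ii) for all $r,s$ there is $i\in\{1,\dots,m_{n-1}\}$ with $\sigma^{(n)}_{r,s}(B(r,n))\subseteq B(i,n-1)$; (iii) the sets $\sigma^{(n)}_{r,s}(B(r,n))$ ($1\le r\le m_n$, $1\le s\le\kappa(r,n)$) are pairwise disjoint and their union is $U_{n-1}$. For $n\ge1$ and $1\le r\le m_n$ let $\tau^{(n)}_{r,1},\dots,\tau^{(n)}_{r,k(r,n)}$ enumerate the partial homeomorphisms $\sigma^{(1)}_{r_1,s_1}\circ\cdots\circ\sigma^{(n)}_{r_n,s_n}$ over all index sequences with $r_n=r$ and $\sigma^{(j)}_{r_j,s_j}(B(r_j,j))\subseteq B(r_{j-1},j-1)$ for $2\le j\le n$ (each has domain $B(r,n)$). $C(U_n,\mathbb Z)$ is the group of continuous integer-valued functions on $U_n$, and $\phi_n:C(U_n,\mathbb Z)\to C(U_{n+1},\mathbb Z)$ is the homomorphism defined, for $x\in B(r,n+1)$, by $\phi_n(\xi)(x)=\sum_{s=1}^{\kappa(r,n+1)}\xi(\sigma^{(n+1)}_{r,s}(x))$. *)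

From HB Require Import structures.
From mathcomp Require Import all_boot all_order all_algebra.
From mathcomp Require Import all_classical all_reals.
From mathcomp Require Import topology.

Set Implicit Arguments.
Unset Strict Implicit.
Unset Printing Implicit Defensive.

Import Order.TTheory GRing.Theory Num.Theory.
Local Open Scope classical_set_scope.
Local Open Scope ring_scope.

(** A partial homeomorphism of X with domain D, given by a (total) function
    f : X -> X whose restriction to D is the partial map: D is clopen, the
    range f(D) is clopen, and f : D -> f(D) is a homeomorphism. *)
Definition partial_homeo {X : topologicalType} (D : set X) (f : X -> X) : Prop :=
  clopen D /\ clopen (f @` D) /\
  (forall x y, D x -> D y -> f x = f y -> x = y) /\
  {within D, continuous f} /\
  (exists g : X -> X, {within f @` D, continuous g} /\
                      (forall x, D x -> g (f x) = x)).

(** U_n = union of B(r,n), 1 <= r <= m_n  (with the conventions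
    m_0 = 1, B(1,0) = X imposed as hypotheses of the theorem). *)
Definition Uset {X : Type} (m : nat -> nat) (B : nat -> nat -> set X) (n : nat)
  : set X := [set x | exists2 r : nat, (1 <= r <= m n)%N & B r n x].

Fixpoint comp_chain {X : Type} (sigma : nat -> nat -> nat -> X -> X)
  (rs ss : nat -> nat) (n : nat) : X -> X :=
  match n with
  | 0 => id
  | n'.+1 => comp_chain sigma rs ss n' \o sigma n'.+1 (rs n'.+1) (ss n'.+1)
  end.

Definition admissible {X : Type} (m : nat -> nat) (B : nat -> nat -> set X)
  (kappa : nat -> nat -> nat) (sigma : nat -> nat -> nat -> X -> X)
  (rs ss : nat -> nat) (n : nat) : Prop :=
  (forall j, (1 <= j <= n)%N -> (1 <= rs j <= m j)%N /\
                                (1 <= ss j <= kappa (rs j) j)%N) /\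
  (forall j, (2 <= j <= n)%N ->
     sigma j (rs j) (ss j) @` B (rs j) j `<=` B (rs j.-1) j.-1).

Definition tau_images {X : Type} (m : nat -> nat) (B : nat -> nat -> set X)
  (kappa : nat -> nat -> nat) (sigma : nat -> nat -> nat -> X -> X)
  : set (set X) :=
  [set A | exists n : nat, exists rs ss : nat -> nat,
     (1 <= n)%N /\ admissible m B kappa sigma rs ss n /\
     A = comp_chain sigma rs ss n @` B (rs n) n].

(** The connecting map phi_n : C(U_n,Z) -> C(U_{n+1},Z), on representatives
    (functions X -> int; only their values on U_n / U_{n+1} matter). *)
Definition phi {X : Type} (m : nat -> nat) (B : nat -> nat -> set X)
  (kappa : nat -> nat -> nat) (sigma : nat -> nat -> nat -> X -> X)
  (n : nat) (xi : X -> int) : X -> int :=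
  fun x => \sum_(1 <= r < (m n.+1).+1)
     (if x \in B r n.+1
      then \sum_(1 <= s < (kappa r n.+1).+1) xi (sigma n.+1 r s x)
      else 0).

Fixpoint phis {X : Type} (ph : nat -> (X -> int) -> (X -> int))
  (n d : nat) (f : X -> int) : X -> int :=
  match d with
  | 0 => f
  | d'.+1 => ph (n + d')%N (phis ph n d' f)
  end.

Definition CZ {X : topologicalType} (U : nat -> set X) (n : nat) (f : X -> int)
  : Prop := {within U n, continuous (f : X -> discrete_topology int)}.

Definition CZt {X : topologicalType} (m : nat -> nat) (B : nat -> nat -> set X)
  (n : nat) (f : X -> int) : Prop :=
  CZ (Uset m B) n f /\
  (forall r, (1 <= r <= m n)%N -> forall x y, B r n x -> B r n y -> f x = f y).

(** Direct limit of the system (G_n, ph_n), where G_n is the set of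
    representatives f with P n f, elements of G_n being equal when they agree
    on U n.  The direct limit is the setoid of pairs (n, f), f in G_n, with
    (n,f) ~ (p,g) iff their images in some G_k, k >= n, p, coincide. *)
Definition dl_carrier {X : Type} (P : nat -> (X -> int) -> Prop)
  (a : nat * (X -> int)) : Prop := P a.1 a.2.

Definition dl_eq {X : Type} (U : nat -> set X)
  (ph : nat -> (X -> int) -> (X -> int)) (a b : nat * (X -> int)) : Prop :=
  exists k : nat, [/\ (a.1 <= k)%N, (b.1 <= k)%N &
    forall x, U k x ->
      phis ph a.1 (k - a.1) a.2 x = phis ph b.1 (k - b.1) b.2 x].

Definition dl_add {X : Type} (ph : nat -> (X -> int) -> (X -> int))
  (a b : nat * (X -> int)) : nat * (X -> int) :=
  let k := maxn a.1 b.1 in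
  (k, fun x => phis ph a.1 (k - a.1) a.2 x + phis ph b.1 (k - b.1) b.2 x).

(** F (a map on representatives) induces a group isomorphism
    lim (P_n, ph) -> lim (Q_n, ph): it maps the carrier into the carrier, is
    well defined on classes, additive, injective and surjective on classes. *)
Definition induces_dl_iso {X : Type} (U : nat -> set X)
  (ph : nat -> (X -> int) -> (X -> int))
  (P Q : nat -> (X -> int) -> Prop)
  (F : nat * (X -> int) -> nat * (X -> int)) : Prop :=
  [/\ (forall a, dl_carrier P a -> dl_carrier Q (F a)),
      (forall a b, dl_carrier P a -> dl_carrier P b ->
                   dl_eq U ph a b -> dl_eq U ph (F a) (F b)),
      (forall a b, dl_carrier P a -> dl_carrier P b ->
                   dl_eq U ph (F (dl_add ph a b)) (dl_add ph (F a) (F b))),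
      (forall a b, dl_carrier P a -> dl_carrier P b ->
                   dl_eq U ph (F a) (F b) -> dl_eq U ph a b) &
      (forall c, dl_carrier Q c ->
                 exists2 a, dl_carrier P a & dl_eq U ph (F a) c)].

From HB Require Import structures.
From mathcomp Require Import all_boot all_order all_algebra.
From mathcomp Require Import all_classical all_reals.
From mathcomp Require Import topology.

Set Implicit Arguments.
Unset Strict Implicit.
Unset Printing Implicit Defensive.

Import Order.TTheory GRing.Theory Num.Theory.
Local Open Scope classical_set_scope.
Local Open Scope ring_scope.

(** The inclusion is clearly an injective homomorphism of direct limits, so
    the content is surjectivity: every f in C(U_n, Z) is eventually mapped
    into the constant-on-blocks subgroup.  Call cylinders of level q and
    depth P the images of the blocks B(r,P) under admissible composites
    sigma^(q+1) o ... o sigma^(P); two cylinders of the same level and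
    depth are equal or disjoint, and deeper cylinders refine shallower
    ones.  As f is locally constant and the tau-images (the level-0
    cylinders) form a basis, compactness of U_n gives a depth P such that f
    is constant on every level-n cylinder of depth P.  Since phi_(n,P) f
    evaluated on B(r,P) sums the values of f on the level-n cylinders below
    B(r,P), phi_(n,P) f is then constant on each block of level P. *)

Definition constant_on {T U : Type} (A : set T) (f : T -> U) :=
  forall x y, A x -> A y -> f x = f y.

Lemma setI_eq0_contra {T : Type} (A C : set T) x :
  A `&` C = set0 -> A x -> C x -> False.
Proof. by move=> AC0 Ax Cx; have : (A `&` C) x by []; rewrite AC0. Qed.

Section LocallyConstant.
Variable X : topologicalType.

Definition locally_constant_on (A : set X) (f : X -> int) :=
  forall x, A x -> nbhs x (fun y => A y -> f y = f x).

Lemma continuous_discreteP (A : set X) (f : X -> int) :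
  {within A, continuous (f : X -> discrete_topology int)} <->
  locally_constant_on A f.
Proof.
rewrite subspace_continuousP.
by split=> h x Ax; [move/(@discrete_cvg (discrete_topology int)): (h x Ax)
                   |apply/(@discrete_cvg (discrete_topology int)); exact: h].
Qed.

Lemma Uset_clopen (m : nat -> nat) (B : nat -> nat -> set X) n :
  (forall r, (1 <= r <= m n)%N -> clopen (B r n)) -> clopen (Uset m B n).
Proof.
move=> hc; have mem_range r : (r \in iota 1 (m n)) = (1 <= r <= m n)%N.
  by rewrite mem_iota add1n ltnS.
have -> : Uset m B n = \bigcup_(r in [set` iota 1 (m n)]) B r n.
  by apply/seteqP; split=> x [r hr Bx]; exists r; rewrite //= ?mem_range in hr *.
split; first by apply: bigcup_open => r /=; rewrite mem_range => /hc[].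
apply: closed_bigcup; first exact: finite_seq.
by move=> r /=; rewrite mem_range => /hc[].
Qed.

End LocallyConstant.

Section Cylinders.
Variables (X : Type) (m : nat -> nat) (B : nat -> nat -> set X).
Variables (kappa : nat -> nat -> nat) (sigma : nat -> nat -> nat -> X -> X).

Hypothesis hBdisj : forall n r r', (1 <= n)%N -> (1 <= r <= m n)%N ->
  (1 <= r' <= m n)%N -> r <> r' -> B r n `&` B r' n = set0.
Hypothesis hkappa : forall n r, (1 <= n)%N -> (1 <= r <= m n)%N ->
  (1 <= kappa r n)%N.
Hypothesis hid : forall n r x, (1 <= n)%N -> (1 <= r <= m n)%N -> B r n x ->
  sigma n r 1%N x = x.
Hypothesis hnest : forall n r s, (1 <= n)%N -> (1 <= r <= m n)%N ->
  (1 <= s <= kappa r n)%N ->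
  exists2 i : nat, (1 <= i <= m n.-1)%N & sigma n r s @` B r n `<=` B i n.-1.
Hypothesis sigma_inj : forall n r s, (1 <= n)%N -> (1 <= r <= m n)%N ->
  (1 <= s <= kappa r n)%N -> forall x y, B r n x -> B r n y ->
  sigma n r s x = sigma n r s y -> x = y.
Hypothesis hpart_disj : forall n r s r' s', (1 <= n)%N -> (1 <= r <= m n)%N ->
  (1 <= s <= kappa r n)%N -> (1 <= r' <= m n)%N ->
  (1 <= s' <= kappa r' n)%N -> (r, s) <> (r', s') ->
  sigma n r s @` B r n `&` sigma n r' s' @` B r' n = set0.

Inductive cylinder (P : nat) : nat -> set X -> Prop :=
| cylinder_block r : (1 <= r <= m P)%N -> cylinder P P (B r P)
| cylinder_step q A r s : cylinder P q.+1 A -> (1 <= r <= m q.+1)%N ->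
    A `<=` B r q.+1 -> (1 <= s <= kappa r q.+1)%N ->
    cylinder P q (sigma q.+1 r s @` A).

Lemma cylinder_level_le P q A : cylinder P q A -> (q <= P)%N.
Proof. by elim=> // q' A' r s _ IH *; exact: ltnW. Qed.

Lemma cylinder_sub_block P q A :
  cylinder P q A -> exists2 r, (1 <= r <= m q)%N & A `<=` B r q.
Proof.
case=> [r hr|q' A' r s _ hr AB hs]; first by exists r.
have [i hi si] := hnest (ltn0Sn _) hr hs.
by exists i => // _ [x Ax <-]; apply: si; exists x => //; exact: AB.
Qed.

Lemma cylinder_sub_Uset P q A : cylinder P q A -> A `<=` Uset m B q.
Proof. by case/cylinder_sub_block=> r hr AB x /AB; exists r. Qed.

Lemma cylinder_meet_eq P q A C : (1 <= P)%N ->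
  cylinder P q A -> cylinder P q C -> A `&` C !=set0 -> A = C.
Proof.
move=> P1 cA; elim: cA C => [r hr|q' A' r s cA' IH hr A'B hs] C cC.
  inversion cC as [r' hr' eqC|q2 C' r' s' cC' hr' C'B hs' eq_q eqC]; subst.
    case=> z [Bz Bz']; case: (eqVneq r r') => [->//|/eqP ne].
    by case: (setI_eq0_contra (hBdisj P1 hr hr' ne) Bz Bz').
  by have := cylinder_level_le cC'; rewrite ltnn.
inversion cC as [r' hr' eqC|q2 C' r' s' cC' hr' C'B hs' eq_q eqC]; subst.
  by have := cylinder_level_le cA'; rewrite ltnn.
case=> _ [[a A'a <-] [c C'c eq_ac]].
have eq_rs : (r, s) = (r', s').
  apply: contrapT => neq_rs.
  apply: (setI_eq0_contra (hpart_disj (ltn0Sn _) hr hs hr' hs' neq_rs)).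
  - by exists a => //; exact: A'B.
  - by rewrite -eq_ac; exists c => //; exact: C'B.
case: eq_rs => eq_r eq_s; subst r' s'.
have ca : c = a := sigma_inj (ltn0Sn _) hr hs (C'B _ C'c) (A'B _ A'a) eq_ac.
by rewrite (IH C' cC') //; exists a; split=> //; rewrite -ca.
Qed.

Lemma cylinder_coarsen P p q A : (p <= P)%N -> cylinder P q A -> (q <= p)%N ->
  A !=set0 -> exists2 A', cylinder p q A' & A `<=` A'.
Proof.
move=> pP cA; elim: cA => [r hr|q' A0 r s cA0 IH hr A0B hs] qp neA.
  have -> : p = P by apply/eqP; rewrite eqn_leq pP qp.
  by exists (B r P) => //; exact: cylinder_block.
case: (ltngtP q' p) => [lt|gt|<-]; last first.
- have [r' hr' sub'] := cylinder_sub_block (cylinder_step cA0 hr A0B hs).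
  by exists (B r' q') => //; exact: cylinder_block.
- by move: qp; rewrite leqNgt gt.
have [a A0a] : A0 !=set0 by case: neA => _ [x Ax _]; exists x.
have [A0' cA0' sA0] := IH lt (ex_intro _ a A0a).
have [r' hr' A0'B] := cylinder_sub_block cA0'.
have eq_r : r = r'.
  apply: contrapT => neq_r.
  apply: setI_eq0_contra (hBdisj (ltn0Sn _) hr hr' neq_r) (A0B a A0a) _.
  exact: A0'B a (sA0 a A0a).
subst r'.
exists (sigma q'.+1 r s @` A0'); first exact: cylinder_step.
by move=> _ [x Ax <-]; exists x => //; exact: sA0.
Qed.

(* Pushing down along the identities sigma^(j)_{r,1} reaches level 0. *)
Lemma cylinder_sub_level0 P q A :
  cylinder P q A -> exists2 A', cylinder P 0 A' & A `<=` A'.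
Proof.
elim: q A => [|q IH] A cA; first by exists A.
have [r hr AB] := cylinder_sub_block cA.
have hs : (1 <= 1 <= kappa r q.+1)%N by rewrite /= hkappa.
have [A' cA' sA'] := IH _ (cylinder_step cA hr AB hs).
by exists A' => // x Ax; apply: sA'; exists x => //; apply: hid => //; exact: AB.
Qed.

Lemma tau_image_cylinder C : tau_images m B kappa sigma C ->
  exists2 p, (1 <= p)%N & cylinder p 0 C.
Proof.
case=> n [rs [ss [n1 [[adm_range adm_nest] ->]]]]; exists n => //.
suff chain j : (j <= n)%N -> forall A, cylinder n j A ->
    ((1 <= j)%N -> A `<=` B (rs j) j) ->
    cylinder n 0 (comp_chain sigma rs ss j @` A).
  apply: chain => //; last by move=> _ x.
  by apply: cylinder_block; case: (adm_range n); rewrite ?n1 ?leqnn.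
elim: j => [|j IH] jn A cA AB; first by rewrite image_id.
rewrite /= -image_comp; have [hr hs] := adm_range j.+1 jn.
apply: IH; first exact: ltnW.
  by apply: cylinder_step => //; exact: AB.
move=> j1 _ [x Ax <-]; apply: (adm_nest j.+1); first by rewrite ltnS j1 jn.
by exists x => //; exact: AB.
Qed.

Lemma phi_on_block q g r x : (1 <= r <= m q.+1)%N -> B r q.+1 x ->
  phi m B kappa sigma q g x =
  \sum_(1 <= s < (kappa r q.+1).+1) g (sigma q.+1 r s x).
Proof.
move=> hr Bx; rewrite /phi (bigD1_seq r) /= ?iota_uniq ?mem_index_iota ?ltnS //.
rewrite (mem_set Bx) [X in _ + X]big1_seq ?addr0 // => i /andP[ne].
rewrite mem_index_iota ltnS => hi; case: ifP => // /set_mem Bix.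
by case: (setI_eq0_contra (hBdisj (ltn0Sn _) hi hr (elimN eqP ne)) Bix Bx).
Qed.

Lemma phi_constant_on_blocks q g r : (1 <= r <= m q.+1)%N ->
  (forall s, (1 <= s <= kappa r q.+1)%N ->
     constant_on (sigma q.+1 r s @` B r q.+1) g) ->
  constant_on (B r q.+1) (phi m B kappa sigma q g).
Proof.
move=> hr gc x y Bx By; rewrite (phi_on_block g hr Bx) (phi_on_block g hr By).
by apply: eq_big_nat => s; rewrite ltnS => hs; apply: (gc s hs); exact: imageP.
Qed.

Lemma phis_constant_on_cylinders P n f :
  (forall A, cylinder P n A -> constant_on A f) ->
  forall d A, cylinder P (n + d) A ->
  constant_on A (phis (phi m B kappa sigma) n d f).
Proof.
move=> fc; elim=> [|d IH] A; first by rewrite addn0; exact: fc.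
rewrite addnS => cA x y Ax Ay; have [r hr AB] := cylinder_sub_block cA.
rewrite /= (phi_on_block _ hr (AB x Ax)) (phi_on_block _ hr (AB y Ay)).
apply: eq_big_nat => s; rewrite ltnS => hs.
by apply: (IH _ (cylinder_step cA hr AB hs)); exact: imageP.
Qed.

(* Push a deep cylinder down to level 0, coarsen it to the depth of a
   covering cylinder meeting it, and the two coincide. *)
Lemma constant_on_deep_cylinders (T : Type) n P0 P (f : X -> T) :
  (forall x, Uset m B n x -> exists2 p, (1 <= p <= P0)%N &
     exists2 C, cylinder p 0 C /\ C x & constant_on C f) ->
  (P0 <= P)%N -> forall A, cylinder P n A -> constant_on A f.
Proof.
move=> cover P0P A cA x y Ax Ay.
have [p /andP[p1 pP0] [C [cC Cx] fC]] := cover x (cylinder_sub_Uset cA Ax).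
have [A0 cA0 AA0] := cylinder_sub_level0 cA.
have [A' cA' A0A'] := cylinder_coarsen (leq_trans pP0 P0P) cA0 (leq0n p)
  (ex_intro _ x (AA0 x Ax)).
have A'C := cylinder_meet_eq p1 cA' cC
  (ex_intro _ x (conj (A0A' x (AA0 x Ax)) Cx)).
by apply: fC => //; rewrite -A'C; apply: A0A'; exact: AA0.
Qed.

End Cylinders.

Section Topology.
Variables (X : topologicalType) (m : nat -> nat) (B : nat -> nat -> set X).
Variables (kappa : nat -> nat -> nat) (sigma : nat -> nat -> nat -> X -> X).

Hypothesis hBdisj : forall n r r', (1 <= n)%N -> (1 <= r <= m n)%N ->
  (1 <= r' <= m n)%N -> r <> r' -> B r n `&` B r' n = set0.
Hypothesis hnest : forall n r s, (1 <= n)%N -> (1 <= r <= m n)%N ->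
  (1 <= s <= kappa r n)%N ->
  exists2 i : nat, (1 <= i <= m n.-1)%N & sigma n r s @` B r n `<=` B i n.-1.
Hypothesis hkappa : forall n r, (1 <= n)%N -> (1 <= r <= m n)%N ->
  (1 <= kappa r n)%N.
Hypothesis hid : forall n r x, (1 <= n)%N -> (1 <= r <= m n)%N -> B r n x ->
  sigma n r 1%N x = x.
Hypothesis sigma_inj : forall n r s, (1 <= n)%N -> (1 <= r <= m n)%N ->
  (1 <= s <= kappa r n)%N -> forall x y, B r n x -> B r n y ->
  sigma n r s x = sigma n r s y -> x = y.
Hypothesis hpart_disj : forall n r s r' s', (1 <= n)%N -> (1 <= r <= m n)%N ->
  (1 <= s <= kappa r n)%N -> (1 <= r' <= m n)%N ->
  (1 <= s' <= kappa r' n)%N -> (r, s) <> (r', s') ->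
  sigma n r s @` B r n `&` sigma n r' s' @` B r' n = set0.
Hypothesis hBopen : forall n r, (1 <= n)%N -> (1 <= r <= m n)%N -> open (B r n).
Hypothesis sigma_cont : forall n r s, (1 <= n)%N -> (1 <= r <= m n)%N ->
  (1 <= s <= kappa r n)%N -> {within B r n, continuous sigma n r s}.

Lemma phi_locally_constant q g : locally_constant_on (Uset m B q) g ->
  locally_constant_on (Uset m B q.+1) (phi m B kappa sigma q g).
Proof.
move=> gc x [r hr Bx].
have near_sigma s : (1 <= s <= kappa r q.+1)%N -> nbhs x (fun y =>
    B r q.+1 y -> g (sigma q.+1 r s y) = g (sigma q.+1 r s x)).
  move=> hs; have [i hi si] := hnest (ltn0Sn _) hr hs.
  have U_sigma y : B r q.+1 y -> Uset m B q (sigma q.+1 r s y).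
    by move=> By; exists i => //; apply: si; exists y.
  have near_g : nbhs x (fun y => B r q.+1 y -> Uset m B q (sigma q.+1 r s y) ->
      g (sigma q.+1 r s y) = g (sigma q.+1 r s x)).
    exact: (subspace_continuousP _ _).1 (sigma_cont (ltn0Sn _) hr hs) x Bx _
      (gc _ (U_sigma x Bx)).
  by apply: filterS near_g => y h By; exact: h (U_sigma y By).
have near_all : nbhs x (fun y => forall i : 'I_(kappa r q.+1),
    B r q.+1 y -> g (sigma q.+1 r i.+1 y) = g (sigma q.+1 r i.+1 x)).
  by apply: filter_forall => i; apply: near_sigma; rewrite /= ltn_ord.
have near_B := open_nbhs_nbhs (conj (hBopen (ltn0Sn _) hr) Bx).
apply: filterS (filterI near_B near_all).
move=> y [By eqs] _.
rewrite (phi_on_block _ _ hBdisj g hr By) (phi_on_block _ _ hBdisj g hr Bx).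
by rewrite !big_add1 !big_mkord; apply: eq_bigr => i _; exact: eqs.
Qed.

Lemma phis_locally_constant n f : locally_constant_on (Uset m B n) f ->
  forall d, locally_constant_on (Uset m B (n + d))
                                (phis (phi m B kappa sigma) n d f).
Proof.
move=> fc; elim=> [|d IH]; first by rewrite addn0.
by rewrite addnS; exact: phi_locally_constant.
Qed.

Lemma phi_CZt n f : CZt m B n f -> CZt m B n.+1 (phi m B kappa sigma n f).
Proof.
case=> /continuous_discreteP fc f_blocks; split.
  exact/continuous_discreteP/phi_locally_constant.
move=> r hr; apply: (phi_constant_on_blocks hBdisj hr) => s hs.
have [i hi si] := hnest (ltn0Sn _) hr hs.
by move=> x y Sx Sy; exact: f_blocks hi _ _ (si x Sx) (si y Sy).
Qed.

Lemma compact_constant_tau_cover n (f : X -> int) :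
  compact (Uset m B n) -> open (Uset m B n) ->
  basis (tau_images m B kappa sigma) -> locally_constant_on (Uset m B n) f ->
  exists P0, forall x, Uset m B n x -> exists2 p, (1 <= p <= P0)%N &
    exists2 C, cylinder m B kappa sigma p 0 C /\ C x & constant_on C f.
Proof.
move=> cptU oU [tau_open tau_nbhs] fc.
pose Q i x := exists2 p, (1 <= p <= i)%N &
  exists2 C, cylinder m B kappa sigma p 0 C /\ C x & constant_on C f.
suff [P0 _ /(_ P0 (leqnn P0)) UQ] : \forall i \near \oo, Uset m B n `<=` Q i.
  by exists P0.
have cover_near := (compact_near_coveringP _).1 cptU nat \oo Q _.
apply: cover_near => x Ux.
have fibre_x : nbhs x (Uset m B n `&` [set y | f y = f x]).
  apply: filterS (filterI (open_nbhs_nbhs (conj oU Ux)) (fc x Ux)).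
  by move=> y [Uy fy]; split=> //; exact: fy.
have [C [tC Cx] C_fibre] := tau_nbhs x _ fibre_x.
have [p p1 cC] := tau_image_cylinder tC.
exists (C, [set i | (p <= i)%N]).
  by split; [exact: open_nbhs_nbhs (conj (tau_open C tC) Cx)|exists p].
move=> [y i] [/= Cy pi]; exists p; first by rewrite p1.
by exists C => // z w /C_fibre [_ ->] /C_fibre [_ ->].
Qed.

Lemma CZ_eventually_CZt n f : compact (Uset m B n) -> open (Uset m B n) ->
  basis (tau_images m B kappa sigma) -> CZ (Uset m B) n f ->
  exists2 P, (n <= P)%N &
    CZt m B P (phis (phi m B kappa sigma) n (P - n) f).
Proof.
move=> cptU oU tau_basis /continuous_discreteP fc.
have [P0 cover] := compact_constant_tau_cover cptU oU tau_basis fc.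
have nP := leq_maxl n P0; exists (maxn n P0) => //; split.
  apply/continuous_discreteP; rewrite -{1}(subnKC nP).
  exact: phis_locally_constant.
move=> r hr; apply: (phis_constant_on_cylinders hBdisj hnest
  (constant_on_deep_cylinders hBdisj hkappa hid hnest sigma_inj hpart_disj
     cover (leq_maxr n P0))).
by rewrite subnKC //; exact: cylinder_block.
Qed.

End Topology.

Theorem mainTheorem8
  (R : realType) (X : pseudoMetricType R)
  (hT2 : hausdorff_space X) (hcpt : compact [set: X])
  (hclopen_basis : exists2 Bs : set (set X), basis Bs & Bs `<=` clopen)
  (m : nat -> nat) (B : nat -> nat -> set X) (kappa : nat -> nat -> nat)
  (sigma : nat -> nat -> nat -> X -> X)
  (hm0 : m 0%N = 1%N) (hB0 : B 1%N 0%N = [set: X])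
  (hm : forall n, (1 <= n)%N -> (1 <= m n)%N)
  (hB : forall n r, (1 <= n)%N -> (1 <= r <= m n)%N ->
          clopen (B r n) /\ B r n !=set0)
  (hBdisj : forall n r r', (1 <= n)%N -> (1 <= r <= m n)%N ->
          (1 <= r' <= m n)%N -> r <> r' -> B r n `&` B r' n = set0)
  (hkappa : forall n r, (1 <= n)%N -> (1 <= r <= m n)%N -> (1 <= kappa r n)%N)
  (hsigma : forall n r s, (1 <= n)%N -> (1 <= r <= m n)%N ->
          (1 <= s <= kappa r n)%N -> partial_homeo (B r n) (sigma n r s))
  (hid : forall n r x, (1 <= n)%N -> (1 <= r <= m n)%N -> B r n x ->
          sigma n r 1%N x = x)
  (hnest : forall n r s, (1 <= n)%N -> (1 <= r <= m n)%N ->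
          (1 <= s <= kappa r n)%N ->
          exists2 i : nat, (1 <= i <= m n.-1)%N &
            sigma n r s @` B r n `<=` B i n.-1)
  (hpart_disj : forall n r s r' s', (1 <= n)%N -> (1 <= r <= m n)%N ->
          (1 <= s <= kappa r n)%N -> (1 <= r' <= m n)%N ->
          (1 <= s' <= kappa r' n)%N -> (r, s) <> (r', s') ->
          sigma n r s @` B r n `&` sigma n r' s' @` B r' n = set0)
  (hpart_cover : forall n, (1 <= n)%N ->
          [set x | exists r s, [/\ (1 <= r <= m n)%N,
                                  (1 <= s <= kappa r n)%N &
                                  (sigma n r s @` B r n) x]]
          = Uset m B n.-1)
  (htau_basis : basis (tau_images m B kappa sigma)) :
  (forall n f, (1 <= n)%N -> CZt m B n f ->
     CZt m B n.+1 (phi m B kappa sigma n f)) /\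
  induces_dl_iso (Uset m B) (phi m B kappa sigma)
    (fun n f => (1 <= n)%N /\ CZt m B n f)
    (fun n f => (1 <= n)%N /\ CZ (Uset m B) n f)
    id.
Proof.
have sigma_inj n r s n1 hr hs := (hsigma n r s n1 hr hs).2.2.1.
have sigma_cont n r s n1 hr hs := (hsigma n r s n1 hr hs).2.2.2.1.
have hBopen n r n1 hr := (hB n r n1 hr).1.1.
have U_clopen n : clopen (Uset m B n).
  apply: Uset_clopen; case: n => [|n] r hr; last by case: (hB n.+1 r isT hr).
  move: hr; rewrite hm0 -eqn_leq => /eqP <-; rewrite hB0.
  by split; [exact: openT|exact: closedT].
split=> [n f _|]; first exact: phi_CZt.
split=> [[n f] [n1 [fC _]] //|//|[a1 a2] [b1 b2] _ _|//|[n f] [n1 fC]].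
  by exists (maxn a1 b1).
have [P nP fP] := CZ_eventually_CZt hBdisj hnest hkappa hid sigma_inj hpart_disj
  hBopen sigma_cont (subclosed_compact (U_clopen n).2 hcpt (subsetT _))
  (U_clopen n).1 htau_basis fC.
exists (P, phis (phi m B kappa sigma) n (P - n) f).
  by split=> //; exact: leq_trans nP.
by exists P; split=> //= x _; rewrite subnn.
Qed.
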